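(* Let $X$ be a random variable on $\{1,2,\dots\}$ with probability mass function $f(x)=\frac{x}{(x+1)!}$, $x=1,2,\dots$. Then $\mathbb E(X)=e-1$, $\mathbb E(X^2)=e+1$, $\mathrm{Var}(X)=e(3-e)$, and the moment generating function is \[\mathbb E(e^{tX})=e^{-t}\bigl(1-e^{e^t}+e^{t+e^t}\bigr)\quad\text{for all real } t.\] *)

From Stdlib Require Import Reals Lra.
From Coquelicot Require Import Coquelicot.
Open Scope R_scope.

Definition pmf (x : nat) : R := INR x / INR (Factorial.fact (x + 1)).

Definition expectation_is (g : R -> R) (v : R) : Prop :=
  is_series (fun n : nat => g (INR (S n)) * pmf (S n)) v.

Definition variance_is (v : R) : Prop :=
  exists mu, expectation_is (fun x => x) mu /\
             expectation_is (fun x => (x - mu) ^ 2) v.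

(* Since x/(x+1)! = 1/x! - 1/(x+1)!, summation by parts turns E[g(X)] into
   g(0) + sum_{x>=1} (g(x) - g(x-1))/x!; the boundary term g(x)/(x+1)!
   vanishes as soon as g grows at most exponentially.  For g = 1, x, x^2 and e^{tx} the differences are
   combinations of s^x with s = 1 or e^t, so every moment reduces to tails
   of the exponential series. *)
From Stdlib Require Import Reals Lra Lia.
From Coquelicot Require Import Coquelicot.
Open Scope R_scope.

Lemma pmf_fact_diff (n : nat) :
  pmf n = / INR (Factorial.fact n) - / INR (Factorial.fact (S n)).
Proof.
  unfold pmf. rewrite Nat.add_1_r, fact_simpl, mult_INR, S_INR.
  field. split; [apply INR_fact_neq_0 | pose proof (pos_INR n); lra].
Qed.

Lemma exp_mult_INR (a : R) (n : nat) : exp (a * INR n) = exp a ^ n.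
Proof.
  induction n as [|n IH].
  - simpl. rewrite Rmult_0_r. apply exp_0.
  - rewrite S_INR, Rmult_plus_distr_l, Rmult_1_r, exp_plus, IH. simpl. ring.
Qed.

Definition exp_term (s : R) (n : nat) : R := s ^ n / INR (Factorial.fact n).

Lemma is_series_exp_term (s : R) : is_series (exp_term s) (exp s).
Proof.
  apply (is_series_ext (fun n => scal (s ^ n) (/ INR (Factorial.fact n)))).
  - intro n. reflexivity.
  - exact (is_exp_Reals s).
Qed.

Lemma is_series_exp_term_succ (s : R) :
  is_series (fun n => exp_term s (S n)) (exp s - 1).
Proof.
  apply is_series_incr_1. unfold plus; simpl.
  replace (exp s - 1 + exp_term s O) with (exp s)
    by (unfold exp_term; simpl; field).
  apply is_series_exp_term.
Qed.

Lemma is_lim_seq_exp_term (s : R) : is_lim_seq (exp_term s) 0.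
Proof. apply ex_series_lim_0. exists (exp s). apply is_series_exp_term. Qed.

Lemma is_series_telescope (r : nat -> R) :
  is_lim_seq r 0 -> is_series (fun n => r n - r (S n)) (r O).
Proof.
  intro Hr.
  assert (Hsum : forall N, sum_n (fun n => r n - r (S n)) N = r O - r (S N)).
  { induction N as [|N IH]; [now rewrite sum_O|].
    rewrite sum_Sn, IH. unfold plus; simpl. ring. }
  change (is_lim_seq (sum_n (fun n => r n - r (S n))) (r O)).
  apply (is_lim_seq_ext (fun N => r O - r (S N))); [intro N; now rewrite Hsum|].
  replace (Finite (r O)) with (Finite (r O - 0)) by (f_equal; ring).
  apply is_lim_seq_minus'; [apply is_lim_seq_const|].
  now apply is_lim_seq_incr_1 in Hr.
Qed.

Lemma is_lim_seq_exp_bounded_div_fact (g : R -> R) (C a : R) :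
  (forall n, Rabs (g (INR n)) <= C * exp (a * INR n)) ->
  is_lim_seq (fun n => g (INR n) / INR (Factorial.fact (S n))) 0.
Proof.
  intro Hg. apply is_lim_seq_abs_0.
  apply (is_lim_seq_le_le (fun _ => 0) _ (fun n => C * exp_term (exp a) n)).
  - intro n. split; [apply Rabs_pos|].
    assert (Hfact : 0 < INR (Factorial.fact n)) by apply INR_fact_lt_0.
    assert (Hfact_le : INR (Factorial.fact n) <= INR (Factorial.fact (S n)))
      by (apply le_INR, Factorial.fact_le; lia).
    unfold exp_term, Rdiv. rewrite <- exp_mult_INR, Rabs_mult, <- Rmult_assoc.
    rewrite Rabs_inv, (Rabs_pos_eq (INR _)) by lra.
    apply Rmult_le_compat; [apply Rabs_pos | left; apply Rinv_0_lt_compat; lra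
                           | apply Hg | apply Rinv_le_contravar; lra].
  - apply is_lim_seq_const.
  - replace (Finite 0) with (Rbar_mult C 0) by (simpl; f_equal; ring).
    apply is_lim_seq_scal_l, is_lim_seq_exp_term.
Qed.

Lemma expectation_is_by_parts (g : R -> R) (C a l v : R) :
  (forall n, Rabs (g (INR n)) <= C * exp (a * INR n)) ->
  is_series (fun n => (g (INR (S n)) - g (INR n)) / INR (Factorial.fact (S n))) l ->
  v = g 0 + l ->
  expectation_is g v.
Proof.
  intros Hg Hl ->.
  pose (r n := g (INR n) / INR (Factorial.fact (S n))).
  assert (Hterm : forall n,
    (g (INR (S n)) - g (INR n)) / INR (Factorial.fact (S n)) + (r n - r (S n))
    = g (INR (S n)) * pmf (S n)).
  { intro n. unfold r. rewrite pmf_fact_diff.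
    pose proof (INR_fact_neq_0 (S n)); pose proof (INR_fact_neq_0 (S (S n))).
    field. tauto. }
  apply (is_series_ext _ _ _ Hterm).
  replace (g 0 + l) with (l + r O) by (unfold r; simpl; field).
  apply (is_series_plus _ _ l (r O)); [exact Hl|].
  apply is_series_telescope, (is_lim_seq_exp_bounded_div_fact g C a Hg).
Qed.

Lemma expectation_is_plus (g h : R -> R) (u v : R) :
  expectation_is g u -> expectation_is h v ->
  expectation_is (fun x => g x + h x) (u + v).
Proof.
  unfold expectation_is. intros Hg Hh.
  assert (Hterm : forall n, g (INR (S n)) * pmf (S n) + h (INR (S n)) * pmf (S n)
                            = (g (INR (S n)) + h (INR (S n))) * pmf (S n))
    by (intro n; ring).
  apply (is_series_ext _ _ _ Hterm).
  now apply (is_series_plus (fun n => g (INR (S n)) * pmf (S n))).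
Qed.

Lemma expectation_is_scal (c : R) (g : R -> R) (u : R) :
  expectation_is g u -> expectation_is (fun x => c * g x) (c * u).
Proof.
  unfold expectation_is. intro Hg.
  assert (Hterm : forall n, c * (g (INR (S n)) * pmf (S n))
                            = c * g (INR (S n)) * pmf (S n))
    by (intro n; ring).
  apply (is_series_ext _ _ _ Hterm).
  now apply (is_series_scal c (fun n => g (INR (S n)) * pmf (S n))).
Qed.

Lemma expectation_is_ext (g h : R -> R) (u : R) :
  (forall x, g x = h x) -> expectation_is g u -> expectation_is h u.
Proof.
  unfold expectation_is. intros Hgh Hg.
  assert (Hterm : forall n, g (INR (S n)) * pmf (S n) = h (INR (S n)) * pmf (S n))
    by (intro n; now rewrite Hgh).
  exact (is_series_ext _ _ _ Hterm Hg).
Qed.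

Lemma INR_le_exp (n : nat) : INR n <= exp (INR n).
Proof. pose proof (exp_ineq1_le (INR n)). lra. Qed.

Lemma expectation_is_one : expectation_is (fun _ => 1) 1.
Proof.
  apply (expectation_is_by_parts _ 1 0 (exp 1 * 0)).
  - intro n. rewrite Rmult_0_l, exp_0, Rabs_R1. lra.
  - assert (Hterm : forall n, exp_term 1 n * 0 = (1 - 1) / INR (Factorial.fact (S n)))
      by (intro n; unfold Rdiv; ring).
    apply (is_series_ext _ _ _ Hterm), is_series_scal_r, is_series_exp_term.
  - ring.
Qed.

Lemma expectation_is_id : expectation_is (fun x => x) (exp 1 - 1).
Proof.
  apply (expectation_is_by_parts _ 1 1 (exp 1 - 1)).
  - intro n. rewrite Rmult_1_l, Rmult_1_l, Rabs_pos_eq by apply pos_INR.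
    apply INR_le_exp.
  - assert (Hterm : forall n,
      exp_term 1 (S n) = (INR (S n) - INR n) / INR (Factorial.fact (S n)))
      by (intro n; unfold exp_term; rewrite pow1, S_INR; field; apply INR_fact_neq_0).
    apply (is_series_ext _ _ _ Hterm), is_series_exp_term_succ.
  - simpl. ring.
Qed.

Lemma expectation_is_sqr : expectation_is (fun x => x ^ 2) (exp 1 + 1).
Proof.
  apply (expectation_is_by_parts _ 1 2 (2 * exp 1 + -1 * (exp 1 - 1))).
  - intro n. rewrite Rmult_1_l, Rabs_pos_eq by (apply pow_le, pos_INR).
    replace (2 * INR n) with (INR n + INR n) by ring.
    rewrite exp_plus, <- Rsqr_pow2.
    apply Rsqr_incr_1; [apply INR_le_exp | apply pos_INR | left; apply exp_pos].
  - assert (Hterm : forall n, 2 * exp_term 1 n + -1 * exp_term 1 (S n)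
                              = (INR (S n) ^ 2 - INR n ^ 2) / INR (Factorial.fact (S n))).
    { intro n. unfold exp_term. rewrite !pow1, fact_simpl, mult_INR, !S_INR.
      field. split; [apply INR_fact_neq_0 | pose proof (pos_INR n); lra]. }
    apply (is_series_ext _ _ _ Hterm).
    apply (is_series_plus (fun n => 2 * exp_term 1 n)).
    + apply (is_series_scal 2 (exp_term 1)), is_series_exp_term.
    + apply (is_series_scal (-1) (fun n => exp_term 1 (S n))), is_series_exp_term_succ.
  - simpl. ring.
Qed.

Lemma expectation_is_exp_mult (t : R) :
  expectation_is (fun x => exp (t * x))
    (exp (- t) * (1 - exp (exp t) + exp (t + exp t))).
Proof.
  apply (expectation_is_by_parts _ 1 t ((1 - exp (- t)) * (exp (exp t) - 1))).
  - intro n. rewrite Rmult_1_l, Rabs_pos_eq by (left; apply exp_pos). lra.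
  - assert (Hterm : forall n, (1 - exp (- t)) * exp_term (exp t) (S n)
      = (exp (t * INR (S n)) - exp (t * INR n)) / INR (Factorial.fact (S n))).
    { intro n. unfold exp_term. rewrite !exp_mult_INR, exp_Ropp. cbn [pow].
      pose proof (exp_pos t). field. split; [apply INR_fact_neq_0 | lra]. }
    apply (is_series_ext _ _ _ Hterm).
    apply (is_series_scal (1 - exp (- t)) (fun n => exp_term (exp t) (S n))).
    apply is_series_exp_term_succ.
  - rewrite Rmult_0_r, exp_0, exp_plus, exp_Ropp.
    pose proof (exp_pos t). field. lra.
Qed.

Lemma variance_is_moments (m m2 : R) :
  expectation_is (fun x => x) m -> expectation_is (fun x => x ^ 2) m2 ->
  variance_is (m2 - m ^ 2).
Proof.
  intros Hm Hm2. exists m. split; [exact Hm|].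
  replace (m2 - m ^ 2) with (m2 + -2 * m * m + m ^ 2 * 1) by ring.
  apply (expectation_is_ext (fun x => x ^ 2 + -2 * m * x + m ^ 2 * 1));
    [intro x; ring|].
  apply expectation_is_plus; [apply expectation_is_plus|];
    try apply expectation_is_scal; auto using expectation_is_one.
Qed.

Theorem mainTheorem3 :
  expectation_is (fun x => x) (exp 1 - 1) /\
  expectation_is (fun x => x ^ 2) (exp 1 + 1) /\
  variance_is (exp 1 * (3 - exp 1)) /\
  (forall t : R,
     expectation_is (fun x => exp (t * x))
       (exp (- t) * (1 - exp (exp t) + exp (t + exp t)))).
Proof.
  split; [exact expectation_is_id|].
  split; [exact expectation_is_sqr|].
  split; [|exact expectation_is_exp_mult].
  replace (exp 1 * (3 - exp 1)) with (exp 1 + 1 - (exp 1 - 1) ^ 2) by ring.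
  exact (variance_is_moments _ _ expectation_is_id expectation_is_sqr).
Qed.
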